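(* Let $f$ be a non-trivial constraint and let $P$ be a multilinear polynomial over $\mathbb{Q}$ in $\ell$ variables of degree $d$ with $0\le d\le\deg(f)$. Then there exist $M$, constraints $f_1,\dots,f_M$ each expressible by $f$ with constants, index tuples $(j_i^1,\dots,j_i^{\mathrm{ar}(f_i)})$ with entries in $[\ell]$, and rationals $\alpha_1,\dots,\alpha_M\in\mathbb{Q}$ such that the polynomial identity $$P(x_1,\dots,x_\ell)=\sum_{i=1}^M\alpha_i\cdot P_{f_i}(x_{j_i^1},\dots,x_{j_i^{\mathrm{ar}(f_i)}})$$ holds.
   Context: A $k$-ary constraint is $f\colon\{0,1\}^k\to\{0,1\}$ ($k=\mathrm{ar}(f)$), trivial if it is constant. Its characteristic polynomial $P_f$ is the unique multilinear polynomial over $\mathbb{R}$ in $k$ variables with $P_f(x)=f(x)$ for all $x\in\{0,1\}^k$; $\deg(f)=\deg(P_f)$. A $d$-ary constraint $g$ is expressible by $f$ with constants if $g(x_1,\dots,x_d)=f(\xi_1,\dots,\xi_k)$ identically, where each $\xi_j$ is either a variable $x_i$ for some $i\in[d]$ or one of the constants $0,1$. *)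

From HB Require Import structures.
From mathcomp Require Import all_boot all_order all_algebra.
From mathcomp Require Import finmap mpoly.
Set Implicit Arguments. Unset Strict Implicit. Unset Printing Implicit Defensive.
Import Order.TTheory GRing.Theory Num.Theory.
Local Open Scope ring_scope.

Record constraint := Constraint {
  ar : nat;
  cfun : {ffun (bool ^ ar) -> bool} }.

Definition trivial_constraint (f : constraint) : Prop :=
  exists b : bool, forall x, cfun f x = b.

Definition multilinear (n : nat) (p : {mpoly rat[n]}) : Prop :=
  forall m, m \in msupp p -> forall i : 'I_n, (m i <= 1)%N.

(* Total degree (degree of the zero polynomial is taken to be 0). *)
Definition mpdeg (n : nat) (p : {mpoly rat[n]}) : nat := (msize p).-1.

Definition charpoly (f : constraint) : {mpoly rat[ar f]} :=
  \sum_(a : bool ^ ar f)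
     (cfun f a)%:R *: \prod_(i < ar f) (if a i then 'X_i else 1 - 'X_i).

Definition cdeg (f : constraint) : nat := mpdeg (charpoly f).

Definition expressible (f g : constraint) : Prop :=
  exists xi : 'I_(ar f) -> 'I_(ar g) + bool,
    forall x : bool ^ ar g,
      cfun g x = cfun f [ffun j => match xi j with inl i => x i | inr b => b end].

Definition subst_vars (l : nat) (g : constraint) (j : 'I_(ar g) -> 'I_l)
    : {mpoly rat[l]} :=
  comp_mpoly [tuple 'X_(j t) | t < ar g] (charpoly g).

(* The characteristic polynomial of f is sum_T mu(T) x^T with Moebius coefficients
   mu(T) = sum_(C <= T) (-1)^|T \ C| f(C), so deg f = |T| for some T with mu(T) <> 0,
   and it suffices to produce every monomial x^S with |S| <= |T|.  Map T onto S,
   leaving the other points of T unmapped, and for C <= T let g_C be f with input t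
   set to 0 off C, to x_j if t is mapped to j, and to 1 otherwise.  Then
   sum_(C <= T) (-1)^|T \ C| g_C(x) = mu(T) [S <= x]: when x_j = 0 for some j in S,
   toggling a preimage of j pairs off opposite terms.  Finally [S <= x] interpolates
   to x^S. *)

From HB Require Import structures.
From mathcomp Require Import all_boot all_order all_algebra.
From mathcomp Require Import finmap mpoly.
Set Implicit Arguments. Unset Strict Implicit. Unset Printing Implicit Defensive.
Import Order.TTheory GRing.Theory Num.Theory.
Local Open Scope ring_scope.

Section Cube.
Variable n : nat.
Implicit Types (a C S T : bool ^ n) (z : 'I_n).

Definition cube_le S a := [forall i, S i ==> a i].

Definition toggle z C : bool ^ n := [ffun i => if i == z then ~~ C i else C i].

Lemma cube_le_refl C : cube_le C C.
Proof. by apply/forallP => i; apply/implyP. Qed.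

Lemma cube_le_trans A B C : cube_le A B -> cube_le B C -> cube_le A C.
Proof.
move=> /forallP leAB /forallP leBC; apply/forallP => i; apply/implyP.
by move=> /(implyP (leAB i)) /(implyP (leBC i)).
Qed.

Lemma cube_le_anti A B : cube_le A B -> cube_le B A -> A = B.
Proof.
move=> /forallP leAB /forallP leBA; apply/ffunP => i.
by move: (leAB i) (leBA i); case: (A i); case: (B i).
Qed.

Lemma cube_lt_witness C a : cube_le C a -> C != a -> exists z, a z && ~~ C z.
Proof.
move=> leCa neCa; apply/existsP; apply: contraNT neCa => /existsPn noz.
apply/eqP/cube_le_anti => //; apply/forallP => i.
by move: (noz i); case: (a i); case: (C i).
Qed.

Lemma toggleK z : involutive (toggle z).
Proof. by move=> C; apply/ffunP => i; rewrite !ffunE; case: eqP => // ->; rewrite negbK. Qed.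

Lemma toggle_at z C : toggle z C z = ~~ C z.
Proof. by rewrite ffunE eqxx. Qed.

Lemma cube_le_togglel z C T : T z -> cube_le (toggle z C) T = cube_le C T.
Proof.
move=> Tz; apply: eq_forallb => i; rewrite ffunE; case: eqP => [->|//].
by rewrite Tz !implybT.
Qed.

Lemma cube_le_toggler z C T : ~~ C z -> cube_le C (toggle z T) = cube_le C T.
Proof.
by move=> Cz; apply: eq_forallb => i; rewrite ffunE; case: eqP => [->|//]; rewrite (negbTE Cz).
Qed.

Lemma sum_toggle_eq0 (V : zmodType) z (P : pred (bool ^ n)) (F : bool ^ n -> V) :
  (forall C, P (toggle z C) = P C) -> (forall C, P C -> F (toggle z C) = - F C) ->
  \sum_(C | P C) F C = 0.
Proof.
move=> Ptoggle Ftoggle; rewrite (bigID (fun C => C z)) /=.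
rewrite (reindex_inj (inv_inj (toggleK z))) /=.
under eq_bigl do rewrite Ptoggle toggle_at.
under eq_bigr => C /andP[PC _] do rewrite Ftoggle //.
by rewrite sumrN addNr.
Qed.

Variable R : comNzRingType.
Implicit Types (h : bool ^ n -> R).

Definition cube_sign T C : R := \prod_i (if T i && ~~ C i then -1 else 1).

Definition moebius h T : R := \sum_(C | cube_le C T) cube_sign T C * h C.

Lemma prod_toggle (g : 'I_n -> bool -> R) z (u : bool ^ n) :
  g z (~~ u z) = - g z (u z) -> \prod_i g i (toggle z u i) = - \prod_i g i (u i).
Proof.
move=> gz; rewrite (bigD1 z) //= [in RHS](bigD1 z) //= toggle_at gz mulNr.
by congr (- (_ * _)); apply: eq_bigr => i /negbTE neiz; rewrite ffunE neiz.
Qed.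

Lemma cube_sign_id C : cube_sign C C = 1.
Proof. by apply: big1 => i _; rewrite andbN. Qed.

Lemma cube_sign_togglel z T C : ~~ C z -> cube_sign (toggle z T) C = - cube_sign T C.
Proof.
move=> Cz; rewrite /cube_sign.
apply: (prod_toggle (g := fun i b => if b && ~~ C i then -1 else 1)).
by rewrite Cz !andbT; case: (T z); rewrite ?opprK.
Qed.

Lemma cube_sign_toggler z T C : T z -> cube_sign T (toggle z C) = - cube_sign T C.
Proof.
move=> Tz; rewrite /cube_sign.
apply: (prod_toggle (g := fun i b => if T i && ~~ b then -1 else 1)).
by rewrite Tz; case: (C z); rewrite ?opprK.
Qed.

Lemma moebius_inversion h a : h a = \sum_(T | cube_le T a) moebius h T.
Proof.
rewrite (exchange_big_dep (cube_le^~ a)) /=; last by move=> T C leTa /cube_le_trans; apply.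
rewrite (bigD1 a) ?cube_le_refl //= [X in _ + X]big1 ?addr0.
  rewrite (big_pred1 a) ?cube_sign_id ?mul1r // => T.
  by apply/andP/eqP => [[leTa leaT] | ->]; [exact: cube_le_anti | rewrite cube_le_refl].
move=> C /andP[leCa neCa]; have [z /andP[az Cz]] := cube_lt_witness leCa neCa.
apply: (@sum_toggle_eq0 R z (fun T => cube_le T a && cube_le C T)
  (fun T => cube_sign T C * h C)) => T.
  by rewrite cube_le_togglel // cube_le_toggler.
by rewrite cube_sign_togglel // mulNr.
Qed.

Definition cube_basis a : {mpoly R[n]} := \prod_(i < n) (if a i then 'X_i else 1 - 'X_i).

Definition cube_interp h : {mpoly R[n]} := \sum_a h a *: cube_basis a.

Definition cube_mono S : 'X_{1..n} := [multinom (S i : nat) | i < n].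

Definition mono_support (m : 'X_{1..n}) : bool ^ n := [ffun i => m i != 0%N].

Lemma eq_cube_interp h1 h2 : h1 =1 h2 -> cube_interp h1 = cube_interp h2.
Proof. by move=> eq_h; apply: eq_bigr => a _; rewrite eq_h. Qed.

Lemma cube_interp_sum (I : finType) (P : pred I) (c : I -> R) (h : I -> bool ^ n -> R) :
  cube_interp (fun a => \sum_(k | P k) c k * h k a) = \sum_(k | P k) c k *: cube_interp (h k).
Proof.
under [RHS]eq_bigr do rewrite scaler_sumr.
rewrite exchange_big; apply: eq_bigr => a _.
by rewrite scaler_suml; apply: eq_bigr => k _; rewrite scalerA.
Qed.

Lemma cube_interp_indicator S : cube_interp (fun a => (cube_le S a)%:R) = 'X_[cube_mono S].
Proof.
(* x^S = prod_i (x_i + [~~ S i] (1 - x_i)), whose expansion runs over the a >= S. *)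
pose F i b : {mpoly R[n]} := if b then 'X_i else if S i then 0 else 1 - 'X_i.
have -> : 'X_[cube_mono S] = \prod_i \sum_b F i b.
  rewrite mpolyXE_id; apply: eq_bigr => i _; rewrite mnmE big_bool /F.
  by case: (S i); rewrite /= ?addr0 // addrC subrK.
rewrite bigA_distr_bigA; apply: eq_bigr => a _.
case: (boolP (cube_le S a)) => [/forallP leSa | /forallPn [i]].
  by rewrite scale1r; apply: eq_bigr => i _; rewrite /F; case: (a i) (leSa i); case: (S i).
rewrite negb_imply => /andP[Si /negbTE ai].
by rewrite scale0r (bigD1 i) //= /F ai Si mul0r.
Qed.

Lemma cube_interpE h : cube_interp h = \sum_T moebius h T *: 'X_[cube_mono T].
Proof.
under [RHS]eq_bigr do rewrite -cube_interp_indicator.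
rewrite -cube_interp_sum; apply: eq_cube_interp => a.
by rewrite [LHS]moebius_inversion big_mkcond; apply: eq_bigr => T _; rewrite mulr_natr mulrb.
Qed.

Lemma cube_mono_inj : injective cube_mono.
Proof.
move=> A B /mnmP eqAB; apply/ffunP => i; move: (eqAB i); rewrite !mnmE.
by case: (A i); case: (B i).
Qed.

Lemma mcoeff_cube_interp h T : (cube_interp h)@_(cube_mono T) = moebius h T.
Proof.
rewrite cube_interpE raddf_sum (bigD1 T) //= mcoeffZ mcoeffX eqxx mulr1 big1 ?addr0 //.
move=> C neCT; rewrite mcoeffZ mcoeffX.
case: eqP => [/cube_mono_inj eqCT | _]; last by rewrite mulr0.
by rewrite eqCT eqxx in neCT.
Qed.

Lemma cube_interp_eq0 h : cube_interp h = 0 -> forall a, h a = 0.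
Proof.
move=> h0 a; rewrite moebius_inversion big1 // => T _.
by rewrite -mcoeff_cube_interp h0 mcoeff0.
Qed.

Lemma msupp_cube_interp h m : m \in msupp (cube_interp h) -> forall i, (m i <= 1)%N.
Proof.
move=> mh i; rewrite leqNgt; apply: contraL mh => m_gt1.
rewrite mcoeff_msupp negbK cube_interpE raddf_sum /= big1 // => T _.
rewrite mcoeffZ mcoeffX; case: eqP => [eqTm | _]; last by rewrite mulr0.
by move: m_gt1; rewrite -eqTm mnmE; case: (T i).
Qed.

Lemma mono_supportK (m : 'X_{1..n}) : (forall i, m i <= 1)%N -> cube_mono (mono_support m) = m.
Proof.
move=> m_le1; apply/mnmP => i; rewrite mnmE ffunE.
by move: (m_le1 i); case: (m i) => [|[]].
Qed.

Lemma mdeg_cube_mono S : mdeg (cube_mono S) = #|[set i | S i]|.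
Proof.
rewrite mdegE -sum1_card [RHS]big_mkcond /=.
by apply: eq_bigr => i _; rewrite mnmE inE; case: (S i).
Qed.

End Cube.

Arguments cube_sign {n R}.

Lemma leq_card_partial_onto (aT rT : finType) (A : {set aT}) (B : {set rT}) :
  (#|A| <= #|B|)%N ->
  exists g : rT -> option aT,
    (forall t j, g t = Some j -> j \in A) /\
    {in A, forall j, exists2 t, t \in B & g t = Some j}.
Proof.
move=> leAB; have [-> | [a0 Aa0]] := set_0Vmem A.
  by exists (fun _ => None); split => // j; rewrite inE.
pose sigma j := enum_val (widen_ord leAB (enum_rank_in Aa0 j)).
have sigma_inj : {in A &, injective sigma}.
  move=> j k Aj Ak /enum_val_inj /(congr1 val) /= /ord_inj eq_rank.
  by rewrite -(enum_rankK_in Aa0 Aj) eq_rank enum_rankK_in.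
exists (fun t => [pick j in A | sigma j == t]); split.
  by move=> t j; case: pickP => [k /andP[Ak _] [<-] | //].
move=> j Aj; exists (sigma j); first exact: enum_valP.
case: pickP => [k /andP[Ak /eqP eq_sigma] | /(_ j)]; last by rewrite Aj eqxx.
by rewrite (sigma_inj k j).
Qed.

Section Wiring.
Variables (R : comNzRingType) (N l : nat) (g : 'I_N -> option 'I_l).

Definition wire (C : bool ^ N) (x : bool ^ l) : bool ^ N :=
  [ffun t => C t && (if g t is Some j then x j else true)].

Lemma moebius_wire (h : bool ^ N -> R) (S : bool ^ l) (T : bool ^ N) x :
    (forall t j, g t = Some j -> S j) -> (forall j, S j -> exists2 t, T t & g t = Some j) ->
  \sum_(C | cube_le C T) cube_sign T C * h (wire C x) = (cube_le S x)%:R * moebius h T.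
Proof.
move=> g_S g_onto; have [/forallP leSx | /forallPn [j]] := boolP (cube_le S x).
  rewrite mul1r; apply: eq_bigr => C _; congr (_ * h _); apply/ffunP => t.
  rewrite ffunE; case: (C t) => //=; case g_t: (g t) => [j|//].
  exact: implyP (leSx j) (g_S t j g_t).
rewrite negb_imply => /andP[Sj /negbTE xj]; have [z Tz gz] := g_onto j Sj.
rewrite mul0r; apply: (@sum_toggle_eq0 _ _ z (fun C => cube_le C T)
  (fun C => cube_sign T C * h (wire C x))) => C; first by rewrite cube_le_togglel.
move=> _; rewrite cube_sign_toggler // mulNr; congr (- (_ * h _)).
by apply/ffunP => t; rewrite !ffunE; case: eqP => [-> | //]; rewrite gz xj !andbF.
Qed.

End Wiring.

Section ConstraintSpan.
Variables (f : constraint) (l : nat).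

Record expressible_term := ExpressibleTerm {
  term_constraint : constraint;
  term_expressible : expressible f term_constraint;
  term_vars : 'I_(ar term_constraint) -> 'I_l;
  term_coef : rat }.

Arguments term_vars : clear implicits.

Definition term_poly (t : expressible_term) : {mpoly rat[l]} :=
  term_coef t *: subst_vars (term_vars t).

Definition cspan (Q : {mpoly rat[l]}) : Prop :=
  exists s : seq expressible_term, Q = \sum_(t <- s) term_poly t.

Lemma cspan0 : cspan 0.
Proof. by exists [::]; rewrite big_nil. Qed.

Lemma cspanD p q : cspan p -> cspan q -> cspan (p + q).
Proof. by move=> [s ->] [s' ->]; exists (s ++ s'); rewrite big_cat. Qed.

Lemma cspanZ c p : cspan p -> cspan (c *: p).
Proof.
move=> [s ->].
exists [seq ExpressibleTerm (term_expressible t) (term_vars t) (c * term_coef t) | t <- s].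
by rewrite big_map scaler_sumr; apply: eq_bigr => t _; rewrite /term_poly scalerA.
Qed.

Lemma cspan_sum (I : Type) (r : seq I) (P : pred I) (F : I -> {mpoly rat[l]}) :
  (forall i, P i -> cspan (F i)) -> cspan (\sum_(i <- r | P i) F i).
Proof.
move=> spanF; elim: r => [|i r IHr]; first by rewrite big_nil; exact: cspan0.
by rewrite big_cons; case: ifP => // Pi; apply: cspanD IHr; apply: spanF.
Qed.

Lemma cspan_subst_vars g (j : 'I_(ar g) -> 'I_l) : expressible f g -> cspan (subst_vars j).
Proof.
by move=> fg; exists [:: ExpressibleTerm fg j 1]; rewrite big_seq1 /term_poly scale1r.
Qed.

Lemma cspan_family Q : cspan Q ->
  exists (M : nat) (fs : 'I_M -> constraint)
         (js : forall i : 'I_M, 'I_(ar (fs i)) -> 'I_l) (alpha : 'I_M -> rat),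
    (forall i, expressible f (fs i)) /\ Q = \sum_(i < M) alpha i *: subst_vars (js i).
Proof.
move=> [s ->]; pose t := tnth (in_tuple s).
exists (size s), (fun i => term_constraint (t i)), (fun i => term_vars (t i)),
  (fun i => term_coef (t i)).
by split=> [i | ]; [exact: term_expressible | rewrite big_tnth].
Qed.

End ConstraintSpan.

Definition ctable (f : constraint) (a : bool ^ ar f) : rat := (cfun f a)%:R.

Arguments ctable : clear implicits.

Lemma charpoly_cube_interp f : charpoly f = cube_interp (ctable f).
Proof. by []. Qed.

Section MonomialSpan.
Variables (f : constraint) (l : nat).

Definition wired_constraint (g : 'I_(ar f) -> option 'I_l) (C : bool ^ ar f) : constraint :=
  Constraint [ffun x : bool ^ l => cfun f (wire g C x)].

Lemma wired_expressible g C : expressible f (wired_constraint g C).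
Proof.
exists (fun t => if C t then if g t is Some j then inl j else inr true else inr false) => x.
by rewrite ffunE; congr (cfun f _); apply/ffunP => t; rewrite !ffunE; case: (C t); case: (g t).
Qed.

Lemma subst_vars_wired g C :
  subst_vars (id : 'I_(ar (wired_constraint g C)) -> 'I_l) =
  cube_interp (fun x => ctable f (wire g C x)).
Proof.
rewrite /subst_vars comp_mpoly_id charpoly_cube_interp.
by apply: eq_cube_interp => x; rewrite /ctable ffunE.
Qed.

Lemma cspan_cube_mono S T : moebius (ctable f) T != 0 ->
  (mdeg (cube_mono S) <= mdeg (cube_mono T))%N -> cspan f ('X_[cube_mono S] : {mpoly rat[l]}).
Proof.
rewrite !mdeg_cube_mono => muT /leq_card_partial_onto [g [g_S g_onto]].
have gS t j : g t = Some j -> S j by move/g_S; rewrite inE.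
have g_ontoS j : S j -> exists2 t, T t & g t = Some j.
  by move=> Sj; have [|t] := g_onto j; rewrite ?inE // => Tt gt; exists t.
have -> : 'X_[cube_mono S] = \sum_(C | cube_le C T)
    ((moebius (ctable f) T)^-1 * cube_sign T C) *:
    subst_vars (id : 'I_(ar (wired_constraint g C)) -> 'I_l).
  under eq_bigr do rewrite subst_vars_wired.
  rewrite -cube_interp_sum -cube_interp_indicator; apply: eq_cube_interp => x.
  under eq_bigr do rewrite -mulrA.
  by rewrite -mulr_sumr (moebius_wire _ _ gS g_ontoS) mulrCA mulVf ?mulr1.
by apply: cspan_sum => C _; apply/cspanZ/cspan_subst_vars/wired_expressible.
Qed.

End MonomialSpan.

Lemma moebius_top_degree f : ~ trivial_constraint f ->
  exists2 T, mdeg (cube_mono T) = cdeg f & moebius (ctable f) T != 0.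
Proof.
rewrite /cdeg /mpdeg charpoly_cube_interp => nontriv_f.
have cp_neq0 : cube_interp (ctable f) != 0.
  apply: contra_notN nontriv_f => /eqP/cube_interp_eq0 cp0; exists false => a.
  by move: (cp0 a); rewrite /ctable; case: (cfun f a) => // /eqP; rewrite oner_eq0.
have lead_le1 := msupp_cube_interp (mlead_supp cp_neq0).
exists (mono_support (mlead (cube_interp (ctable f)))).
  by rewrite mono_supportK // -mlead_deg.
by rewrite -mcoeff_cube_interp mono_supportK // mleadc_eq0.
Qed.

Theorem lemma15 (f : constraint) (l d : nat) (P : {mpoly rat[l]}) :
  ~ trivial_constraint f ->
  multilinear P -> mpdeg P = d -> (d <= cdeg f)%N ->
  exists (M : nat) (fs : 'I_M -> constraint)
         (js : forall i : 'I_M, 'I_(ar (fs i)) -> 'I_l) (alpha : 'I_M -> rat),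
    (forall i, expressible f (fs i)) /\
    P = \sum_(i < M) alpha i *: subst_vars (js i).
Proof.
move=> nontriv_f P_multilinear degP le_d_deg_f.
have [T degT muT] := moebius_top_degree nontriv_f.
apply: cspan_family; rewrite (mpolyE P) big_seq_cond.
apply: cspan_sum => m /andP[mP _]; apply: cspanZ.
have m_le1 := P_multilinear m mP; rewrite -(mono_supportK m_le1).
have deg_m : (mdeg m <= mpdeg P)%N.
  by move: (msize_mdeg_lt mP); rewrite /mpdeg; case: (msize P).
apply: (cspan_cube_mono muT); rewrite mono_supportK // degT.
by apply: leq_trans deg_m _; rewrite degP.
Qed.
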